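(* Let $\mathcal A$ be a finite set of monomials of $S=K[x_1,\ldots,x_n]$, minimal with respect to divisibility, let $\alpha=(k_1,\ldots,k_n)\in\mathbb N^n$, fix $i$, and let $\beta=\alpha+\epsilon_i$. Let $\gamma=\mathbf 1+\epsilon_{ik_i}\in\mathbb N^{|\alpha|}$, where $\mathbf 1$ is the all-ones vector and $\epsilon_{ik_i}$ is the unit vector at the coordinate corresponding to the variable $x_{ik_i}$ of $S^\alpha$. Then there is a $K$-algebra isomorphism $K[(\mathcal A^\alpha)^\gamma]\cong K[\mathcal A^\beta]$ (induced by a relabeling of variables).
   Context: $\mathbb N$ denotes the positive integers. For $\alpha=(k_1,\ldots,k_n)$, $S^\alpha=K[x_{ij}:1\le i\le n,1\le j\le k_i]$, $\pi:S^\alpha\to S$, $x_{ij}\mapsto x_i$, and for a set $\mathcal A$ of monomials of $S$ minimal w.r.t. divisibility, $\mathcal A^\alpha$ is the set of monomials $w\in S^\alpha$ with $\pi(w)\in\mathcal A$. The same construction is applied to $\mathcal A^\alpha$, viewed as a set of monomials in the $|\alpha|=k_1+\cdots+k_n$ variables $x_{ij}$ of $S^\alpha$, with respect to $\gamma\in\mathbb N^{|\alpha|}$, giving $(\mathcal A^\alpha)^\gamma$. $K[\mathcal B]$ denotes the $K$-algebra generated by a set of monomials $\mathcal B$. *)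

From HB Require Import structures.
From mathcomp Require Import all_boot all_algebra.
From mathcomp Require Import mpoly.
Set Implicit Arguments. Unset Strict Implicit. Unset Printing Implicit Defensive.
Import GRing.Theory.
Local Open Scope ring_scope.

Definition polyV (K : comRingType) (V : finType) := {mpoly K[#|V|]}.
Definition xv (K : comRingType) (V : finType) (v : V) : polyV K V :=
  'X_(enum_rank v).

Definition expo (V : finType) := {ffun V -> nat}.
Definition monoV (K : comRingType) (V : finType) (e : expo V) : polyV K V :=
  \prod_(v : V) xv K v ^+ e v.

Inductive in_alg (K : comRingType) (V : finType) (B : pred (expo V))
  : polyV K V -> Prop :=
  | alg_const (c : K) : in_alg B (c%:MP)
  | alg_mono (e : expo V) : B e -> in_alg B (monoV K e)
  | alg_add (p q : polyV K V) : in_alg B p -> in_alg B q -> in_alg B (p + q)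
  | alg_mul (p q : polyV K V) : in_alg B p -> in_alg B q -> in_alg B (p * q).

(* Variables of the expanded ring for a vector g : V -> nat:
   the pairs (v, j) with j < g v (x_{v,j}, 0-based second index). *)
Definition expvars (V : finType) (g : V -> nat) : finType :=
  {v : V & 'I_(g v)}.

(* pi : x_{v,j} |-> x_v, on exponent vectors. *)
Definition proj (V : finType) (g : V -> nat) (w : expo (expvars g)) : expo V :=
  [ffun v => \sum_(j < g v) w (Tagged (fun v => 'I_(g v)) j)].

Definition expand (V : finType) (B : pred (expo V)) (g : V -> nat)
  : pred (expo (expvars g)) := fun w => B (proj w).

Definition rename (K : comRingType) (V W : finType) (sigma : V -> W)
  (p : polyV K V) : polyV K W :=
  mmap (@mpolyC _ K) (fun r => xv K (sigma (enum_val r))) p.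

Arguments expand {V} B g _.
Arguments proj {V} g w.
Arguments rename K {V W} sigma p.

(* Splitting the last variable x_{i,k_i} of S^alpha into two variables is the
   same as adjoining one more variable to the i-th block.  Precisely, the
   relabeling x_{v,k,j} |-> x_{v,k+j} of the variables of (S^alpha)^gamma is a
   bijection onto the variables of S^beta (j > 0 only for v = i, k = k_i - 1),
   and it respects the fibres over x_v, so pi_beta corresponds to
   pi_alpha o pi_gamma.  Hence it maps the exponents of (A^alpha)^gamma onto
   those of A^beta, and the induced relabeling of polynomials restricts to an
   isomorphism of the generated algebras. *)
From HB Require Import structures.
From mathcomp Require Import all_boot all_algebra.
From mathcomp Require Import mpoly.
From mathcomp Require Import zify.
Set Implicit Arguments. Unset Strict Implicit. Unset Printing Implicit Defensive.
Local Open Scope ring_scope.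

Definition expo_pull (V W : finType) (s : V -> W) (f : expo W) : expo V :=
  [ffun v => f (s v)].

Section Rename.
Import GRing.Theory.
Variable K : comNzRingType.

Lemma renameC (V W : finType) (s : V -> W) c : rename K s c%:MP = c%:MP.
Proof. exact: mmapC. Qed.

Lemma renameD (V W : finType) (s : V -> W) p q :
  rename K s (p + q) = rename K s p + rename K s q.
Proof. exact: rmorphD. Qed.

Lemma renameM (V W : finType) (s : V -> W) p q :
  rename K s (p * q) = rename K s p * rename K s q.
Proof. exact: rmorphM. Qed.

Lemma renameX (V W : finType) (s : V -> W) v : rename K s (xv K v) = xv K (s v).
Proof. by rewrite /rename /xv mmapX mmap1U enum_rankK. Qed.

Lemma rename_monomial (V W : finType) (s : V -> W) c m :
  rename K s (c *: 'X_[m]) = c%:MP * \prod_(r < #|V|) xv K (s (enum_val r)) ^+ m r.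
Proof. by rewrite /rename mmapZ mmapX. Qed.

Lemma eq_rename (V W : finType) (s t : V -> W) :
  s =1 t -> rename K s =1 rename K t.
Proof.
move=> st p; rewrite /rename /mmap; apply: eq_bigr => m _.
by congr (_ * _); apply: mmap1_eq => r; rewrite st.
Qed.

Lemma rename_comp (V W U : finType) (s : V -> W) (t : W -> U) p :
  rename K t (rename K s p) = rename K (t \o s) p.
Proof.
elim/mpolyind: p => [|c m p _ _ IHp]; first by rewrite /rename !raddf0.
rewrite !renameD IHp !rename_monomial renameM renameC.
congr (_ * _ + _); rewrite {1}/rename rmorph_prod; apply: eq_bigr => r _.
by rewrite rmorphXn /= -/(rename K t _) renameX.
Qed.

Lemma rename_id (V : finType) p : rename K (@id V) p = p.
Proof.
elim/mpolyind: p => [|c m p _ _ IHp]; first by rewrite /rename !raddf0.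
rewrite renameD IHp rename_monomial -mul_mpolyC -mmap1_id /mmap1.
by congr (_ * _ + _); apply: eq_bigr => r _; rewrite /xv enum_valK.
Qed.

Lemma rename_inj (V W : finType) (s : V -> W) :
  bijective s -> injective (rename K s).
Proof.
case=> s' ss' _; apply: (can_inj (g := rename K s')) => p.
by rewrite rename_comp (eq_rename ss') rename_id.
Qed.

Lemma rename_monoV (V W : finType) (s : V -> W) (f : expo W) :
  bijective s -> rename K s (monoV K (expo_pull s f)) = monoV K f.
Proof.
move=> s_bij; rewrite /monoV {1}/rename rmorph_prod.
rewrite (reindex s (onW_bij _ s_bij)) /=.
by apply: eq_bigr => v _; rewrite rmorphXn /= -/(rename K s _) renameX ffunE.
Qed.

End Rename.

Section RelabeledAlgebra.
Variables (K : comNzRingType) (V W : finType) (s : V -> W).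
Variables (B : pred (expo V)) (C : pred (expo W)).
Hypothesis s_bij : bijective s.
Hypothesis C_pull : forall f, C f = B (expo_pull s f).

Lemma rename_in_alg p : in_alg B p -> in_alg C (rename K s p).
Proof.
have [s' ss' _] := s_bij.
elim=> [c | e Be | p1 p2 _ IH1 _ IH2 | p1 p2 _ IH1 _ IH2].
- by rewrite renameC; apply: alg_const.
- have e_pull : e = expo_pull s (expo_pull s' e).
    by apply/ffunP => v; rewrite !ffunE ss'.
  by rewrite e_pull rename_monoV //; apply: alg_mono; rewrite C_pull -e_pull.
- by rewrite renameD; apply: alg_add.
- by rewrite renameM; apply: alg_mul.
Qed.

Lemma in_alg_rename q : in_alg C q -> exists2 p, in_alg B p & rename K s p = q.
Proof.
elim=> [c | f Cf | _ _ _ [p1 B1 <-] _ [p2 B2 <-] | _ _ _ [p1 B1 <-] _ [p2 B2 <-]].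
- by exists c%:MP; [apply: alg_const | rewrite renameC].
- by exists (monoV K (expo_pull s f)); [apply: alg_mono; rewrite -C_pull |
    exact: rename_monoV].
- by exists (p1 + p2); [apply: alg_add | rewrite renameD].
- by exists (p1 * p2); [apply: alg_mul | rewrite renameM].
Qed.

End RelabeledAlgebra.

Lemma projE (V : finType) (g : V -> nat) (w : expo (expvars g)) v :
  proj g w v = (\sum_(x | tag x == v) w x)%N.
Proof.
rewrite ffunE -(big_pred1_eq addn v (fun u => \sum_(j < g u) w (Tagged _ j))).
rewrite (sig_big_dep (fun u => u == v) (fun _ _ => true)
  (fun u j => w (Tagged (fun u => 'I_(g u)) j))).
by apply: eq_big => [[u j]|[u j] _] //=; rewrite andbT.
Qed.

Lemma proj_pull (V : finType) (g g' : V -> nat) (h : expvars g -> nat)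
    (s : expvars h -> expvars g') :
  bijective s -> (forall x, tag (s x) = tag (tag x)) ->
  forall f, proj g' f = proj g (proj h (expo_pull s f)).
Proof.
move=> s_bij s_tag f; apply/ffunP => v; rewrite projE [RHS]projE.
rewrite (reindex s (onW_bij _ s_bij)) /=.
rewrite (partition_big (fun x => tag x) (fun u => tag u == v)) /=; last first.
  by move=> x; rewrite s_tag.
apply: eq_bigr => u /eqP tag_u; rewrite projE; apply: eq_big => x.
  by rewrite s_tag; case: (tag x =P u) => [->|]; rewrite ?tag_u ?eqxx ?andbF.
by rewrite ffunE.
Qed.

Lemma expvars_eq (V : finType) (g : V -> nat) (y1 y2 : expvars g) :
  tag y1 = tag y2 -> val (tagged y1) = val (tagged y2) -> y1 = y2.
Proof. by case: y1 y2 => [v k1] [v' k2] /= eq_v; subst v' => /val_inj ->. Qed.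

Section JoinVariables.
Variables (n : nat) (alpha : 'I_n -> nat) (i : 'I_n).

Definition grow_block (v : 'I_n) : nat := (alpha v + (v == i))%N.

Definition split_last_var (u : expvars alpha) : nat :=
  if (tag u == i) && (val (tagged u) == (alpha i).-1) then 2%N else 1%N.

(* The [insubd] default is never used: see [join_var_val]. *)
Definition join_var (x : expvars split_last_var) : expvars grow_block :=
  Tagged (fun v => 'I_(grow_block v))
    (insubd (widen_ord (leq_addr _ _) (tagged (tag x)))
            (val (tagged (tag x)) + val (tagged x))%N).

Lemma split_last_varP (u : expvars alpha) (j : 'I_(split_last_var u)) :
  val j = 0%N \/ [/\ val j = 1%N, tag u = i & val (tagged u) = (alpha i).-1].
Proof.
case: j => k /=; rewrite /split_last_var.
case: andP => [[/eqP tag_u /eqP val_u] | _]; last by case: k => [|[]]; left.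
by case: k => [|[|]] //; [left | right].
Qed.

Lemma join_var_val (x : expvars split_last_var) :
  val (tagged (join_var x)) = (val (tagged (tag x)) + val (tagged x))%N.
Proof.
rewrite val_insubd; case: ifP => // /negP []; case: x => [[v k] j] /=.
have lt_k := ltn_ord k; rewrite /grow_block.
case: (split_last_varP j) => [-> | [-> /= tag_u val_k]].
  by rewrite addn0 ltn_addr.
rewrite /= in tag_u val_k; subst v; rewrite eqxx; lia.
Qed.

Lemma join_var_split (x : expvars split_last_var) :
  val (tagged (tag x)) = minn (val (tagged (join_var x))) (alpha (tag (tag x))).-1.
Proof.
rewrite join_var_val; case: x => [[v k] j] /=; have lt_k := ltn_ord k.
case: (split_last_varP j) => [-> | [-> /= tag_u val_k]]; first by lia.
rewrite /= in tag_u val_k; subst v; lia.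
Qed.

Lemma join_var_inj : injective join_var.
Proof.
move=> x1 x2 eq_x.
have eq_v : tag (tag x1) = tag (tag x2) := congr1 tag eq_x.
have eq_k : val (tagged (tag x1)) = val (tagged (tag x2)).
  by rewrite join_var_split [RHS]join_var_split eq_x eq_v.
have eq_j : val (tagged x1) = val (tagged x2).
  apply/(@addnI (val (tagged (tag x1)))).
  by rewrite -join_var_val eq_k -join_var_val eq_x.
by apply: expvars_eq => //; apply: expvars_eq.
Qed.

Hypothesis alpha_gt0 : forall v, (0 < alpha v)%N.

Lemma join_var_surj (y : expvars grow_block) : y \in codom join_var.
Proof.
case: y => v [m lt_m]; apply/codomP.
have [lt_mv | le_vm] := ltnP m (alpha v).
  pose u := Tagged (fun v => 'I_(alpha v)) (Ordinal lt_mv).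
  have gt0_u : (0 < split_last_var u)%N by rewrite /split_last_var; case: ifP.
  exists (Tagged (fun u => 'I_(split_last_var u)) (Ordinal gt0_u)).
  by apply: expvars_eq => //; rewrite join_var_val /= addn0.
have eq_v : v = i.
  apply/eqP; apply: contraTT lt_m => /negbTE ne_v.
  by rewrite /grow_block ne_v addn0 -leqNgt.
subst v; have lt_k : ((alpha i).-1 < alpha i)%N by rewrite prednK ?alpha_gt0.
pose u := Tagged (fun v => 'I_(alpha v)) (Ordinal lt_k).
have lt1_u : (1 < split_last_var u)%N by rewrite /split_last_var /= !eqxx.
exists (Tagged (fun u => 'I_(split_last_var u)) (Ordinal lt1_u)).
apply: expvars_eq => //; rewrite join_var_val /=.
move: lt_m; rewrite /grow_block eqxx; lia.
Qed.

Lemma join_var_bij : bijective join_var.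
Proof.
apply: inj_card_bij; first exact: join_var_inj.
rewrite -(card_codom join_var_inj); apply/subset_leq_card/subsetP => y _.
exact: join_var_surj.
Qed.
End JoinVariables.

Theorem lemma2p10 (K : fieldType) (n : nat) (A : seq (expo 'I_n))
  (alpha : 'I_n -> nat) (i : 'I_n) :
  (forall j, (0 < alpha j)%N) ->
  (forall a b, a \in A -> b \in A -> (forall k, (a k <= b k)%N) -> a = b) ->
  let beta : 'I_n -> nat := fun j => (alpha j + (j == i))%N in
  let gamma : expvars alpha -> nat := fun u =>
    if (tag u == i) && (val (tagged u) == (alpha i).-1) then 2%N else 1%N in
  let Aa : pred (expo (expvars alpha)) := expand (fun a => a \in A) alpha in
  let Aag : pred (expo (expvars gamma)) := expand Aa gamma in
  let Ab : pred (expo (expvars beta)) := expand (fun a => a \in A) beta in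
  exists sigma : expvars gamma -> expvars beta,
    bijective sigma /\
    injective (rename K sigma) /\
    (forall p, in_alg Aag p -> in_alg Ab (rename K sigma p)) /\
    (forall q, in_alg Ab q -> exists2 p, in_alg Aag p & rename K sigma p = q).
Proof.
move=> alpha_gt0 _ beta gamma Aa Aag Ab.
have sigma_bij := join_var_bij i alpha_gt0.
have Ab_pull f : Ab f = Aag (expo_pull (join_var (i:=i)) f).
  by rewrite /Ab /Aag /Aa /expand (proj_pull sigma_bij).
exists (join_var (i:=i)); split; first exact: sigma_bij.
split; first exact: rename_inj.
split; [exact: rename_in_alg | exact: in_alg_rename].
Qed.
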